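(* Let $b_n$ be the number of big-walks of length $2n$. Then $b_{m+n}\ge b_m b_n$ for all $m,n\ge 0$, and $b_n\le 16^n$; consequently $\lim_{n\to\infty}\sqrt[n]{b_n}$ exists and is finite. Moreover, if $\hat b_n$ denotes the number of left-walks of length $2n$, then $2\hat b_n\ge b_n$ and $\lim_{n\to\infty}\sqrt[n]{\hat b_n}=\lim_{n\to\infty}\sqrt[n]{b_n}$.
   Context: All walks are finite sequences of unit steps from $\{N,E,S,W\}=\{(0,1),(1,0),(0,-1),(-1,0)\}$ on $\mathbb{Z}^2$, starting at $(0,0)$. A walk is \emph{eager} if it contains no two consecutive steps $E$ then $S$, and no two consecutive steps $N$ then $W$. A \emph{QP-subloop} of a walk is a contiguous subsequence of steps starting and ending at the same point $(p,q)$ and visiting only points $(x,y)$ with $x\ge p$, $y\ge q$. A walk is \emph{standard} if every QP-subloop (of positive length) begins with an $N$ step. A \emph{big-walk} is a standard eager walk staying in the half-plane $\{x+y\ge 0\}$ and ending at some point $(x,-x)$. A \emph{left-walk} is a big-walk ending at a point $(x,-x)$ with $x\le 0$. *)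

From Stdlib Require Import Reals ZArith List Lia.
Import ListNotations.

Inductive step : Set := StN | StE | StS | StW.

Definition delta (s : step) : Z * Z :=
  match s with
  | StN => (0%Z, 1%Z)
  | StE => (1%Z, 0%Z)
  | StS => (0%Z, (-1)%Z)
  | StW => ((-1)%Z, 0%Z)
  end.

Fixpoint endpoint (w : list step) : Z * Z :=
  match w with
  | [] => (0%Z, 0%Z)
  | s :: w' => let (a, b) := delta s in
               let (x, y) := endpoint w' in ((a + x)%Z, (b + y)%Z)
  end.

Definition pt (w : list step) (k : nat) : Z * Z := endpoint (firstn k w).

Definition eager (w : list step) : Prop :=
  (~ exists u v, w = u ++ StE :: StS :: v) /\
  (~ exists u v, w = u ++ StN :: StW :: v).

(* the contiguous subsequence of steps i+1..j (0-based indices i..j-1),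
   going from pt w i to pt w j, is a QP-subloop (of positive length iff i<j) *)
Definition QP_subloop (w : list step) (i j : nat) : Prop :=
  (i <= j)%nat /\ (j <= length w)%nat /\ pt w i = pt w j /\
  forall k, (i <= k <= j)%nat ->
    (fst (pt w i) <= fst (pt w k))%Z /\ (snd (pt w i) <= snd (pt w k))%Z.

Definition standard (w : list step) : Prop :=
  forall i j, (i < j)%nat -> QP_subloop w i j -> nth i w StN = StN.

Definition big_walk (w : list step) : Prop :=
  standard w /\ eager w /\
  (forall k, (k <= length w)%nat -> (0 <= fst (pt w k) + snd (pt w k))%Z) /\
  (fst (endpoint w) + snd (endpoint w) = 0)%Z.

Definition left_walk (w : list step) : Prop :=
  big_walk w /\ (fst (endpoint w) <= 0)%Z.

Definition counts (P : list step -> Prop) (c : nat -> nat) : Prop :=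
  forall n, exists l : list (list step),
    NoDup l /\ (forall w, In w l <-> (length w = 2 * n)%nat /\ P w) /\
    length l = c n.

(* n-th root of c n, indexed so that nroot c n = (c (n+1))^(1/(n+1)) *)
Definition nroot (c : nat -> nat) (n : nat) : R :=
  Rpower (INR (c (S n))) (/ INR (S n)).

From Stdlib Require Import Reals ZArith List Lia Lra Classical ClassicalEpsilon.
Import ListNotations.

(* Concatenating big-walks gives a big-walk, so b is supermultiplicative and Fekete's lemma
   applied to ln b_n yields the limit of the n-th roots; b_n <= 16^n since there are only
   4^(2n) walks of length 2n. The map [flip] reflects a walk across the diagonal step by step,
   except that each maximal QP-subloop starting at the current point is copied unchanged.
   Such loops stay in the quadrant above their start, so [flip] keeps the QP-subloops at the
   origin, standardness, eagerness and the half-plane condition; it is an involution and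
   exchanges the coordinates of the endpoint. Hence it maps the big-walks ending at (x,-x)
   with x > 0 injectively to left-walks, giving b_n <= 2 \hat b_n; as \hat b_n <= b_n too,
   the log-rates of b and \hat b differ by at most ln 2 / n. *)

Open Scope Z_scope.

Lemma pair_eq_iff (p q : Z * Z) : p = q <-> fst p = fst q /\ snd p = snd q.
Proof. destruct p, q; simpl; split; [intros [= -> ->] | intros [-> ->]]; auto. Qed.

Ltac pair_lia := apply pair_eq_iff; simpl; lia.

Lemma endpoint_cons s w : endpoint (s :: w) =
  (fst (delta s) + fst (endpoint w), snd (delta s) + snd (endpoint w)).
Proof. simpl. destruct (delta s), (endpoint w). reflexivity. Qed.

Lemma endpoint_app u v : endpoint (u ++ v) =
  (fst (endpoint u) + fst (endpoint v), snd (endpoint u) + snd (endpoint v)).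
Proof.
  induction u as [|s u IH]; simpl app.
  - simpl. destruct (endpoint v); reflexivity.
  - rewrite !endpoint_cons, IH. pair_lia.
Qed.

Lemma pt_0 w : pt w 0 = (0, 0).
Proof. reflexivity. Qed.

Lemma pt_full w k : (length w <= k)%nat -> pt w k = endpoint w.
Proof. intros; unfold pt; rewrite firstn_all2; auto. Qed.

Lemma pt_cons s w k : pt (s :: w) (S k) =
  (fst (delta s) + fst (pt w k), snd (delta s) + snd (pt w k)).
Proof. apply endpoint_cons. Qed.

Lemma pt_succ w k : (k < length w)%nat -> pt w (S k) =
  (fst (pt w k) + fst (delta (nth k w StN)), snd (pt w k) + snd (delta (nth k w StN))).
Proof.
  revert k; induction w as [|s w IH]; intros k Hk; simpl in Hk; [lia|].
  destruct k as [|k].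
  - rewrite pt_cons, pt_0. pair_lia.
  - rewrite !pt_cons, IH by lia. pair_lia.
Qed.

Lemma pt_app_l u v k : (k <= length u)%nat -> pt (u ++ v) k = pt u k.
Proof.
  intros Hk. unfold pt. rewrite firstn_app.
  replace (k - length u)%nat with 0%nat by lia. rewrite app_nil_r. reflexivity.
Qed.

Lemma pt_app_r u v k : (length u <= k)%nat -> pt (u ++ v) k =
  (fst (endpoint u) + fst (pt v (k - length u)),
   snd (endpoint u) + snd (pt v (k - length u))).
Proof.
  intros Hk. unfold pt at 1. rewrite firstn_app, firstn_all2 by lia. apply endpoint_app.
Qed.

Lemma QP_subloop_app_l u v i j : (j <= length u)%nat ->
  QP_subloop (u ++ v) i j <-> QP_subloop u i j.
Proof.
  intros Hj; unfold QP_subloop. rewrite length_app.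
  split; intros (Hij & Hjw & Hloop & Hquad); (split; [lia | split; [lia | split]]).
  - rewrite <- (pt_app_l u v i), <- (pt_app_l u v j) by lia. auto.
  - intros k Hk. rewrite <- (pt_app_l u v i), <- (pt_app_l u v k) by lia. apply Hquad; lia.
  - rewrite (pt_app_l u v i), (pt_app_l u v j) by lia. auto.
  - intros k Hk. rewrite (pt_app_l u v i), (pt_app_l u v k) by lia. apply Hquad; lia.
Qed.

Lemma QP_subloop_app_r u v i j : (length u <= i <= j)%nat ->
  QP_subloop (u ++ v) i j <-> QP_subloop v (i - length u) (j - length u).
Proof.
  intros Hij; unfold QP_subloop. rewrite length_app.
  split; intros (_ & Hjw & Hloop & Hquad); (split; [lia | split; [lia | split]]).
  - rewrite (pt_app_r u v i), (pt_app_r u v j), pair_eq_iff in Hloop by lia.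
    simpl in Hloop. pair_lia.
  - intros k Hk. specialize (Hquad (k + length u)%nat ltac:(lia)).
    rewrite (pt_app_r u v i), (pt_app_r u v (k + length u)) in Hquad by lia.
    simpl in Hquad. rewrite Nat.add_sub in Hquad. lia.
  - rewrite pair_eq_iff in Hloop. simpl in Hloop.
    rewrite (pt_app_r u v i), (pt_app_r u v j) by lia. pair_lia.
  - intros k Hk. specialize (Hquad (k - length u)%nat ltac:(lia)).
    rewrite (pt_app_r u v i), (pt_app_r u v k) by lia. simpl. lia.
Qed.

Lemma standard_app_r u v : standard (u ++ v) -> standard v.
Proof.
  intros Hstd i j Hij Hloop.
  assert (Hloop' : QP_subloop (u ++ v) (i + length u) (j + length u)).
  { apply QP_subloop_app_r; [destruct Hloop; lia|]. rewrite !Nat.add_sub. auto. }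
  specialize (Hstd (i + length u)%nat (j + length u)%nat ltac:(lia) Hloop').
  rewrite app_nth2, Nat.add_sub in Hstd by lia. exact Hstd.
Qed.

Lemma QP_subloop_extend w i j k : QP_subloop w 0 k -> QP_subloop w i j ->
  (i <= k <= j)%nat -> QP_subloop w 0 j.
Proof.
  intros (_ & _ & Hk & Hquadk) (Hij & Hjw & Hloop & Hquad) Hikj.
  rewrite pt_0 in Hk, Hquadk.
  assert (Hi := Hquadk i ltac:(lia)). assert (Hki := Hquad k ltac:(lia)).
  rewrite <- Hk in Hki. simpl in Hi, Hki.
  assert (Hpi : pt w i = (0, 0)) by pair_lia.
  rewrite Hpi in Hquad.
  split; [lia | split; [lia | split]].
  - rewrite pt_0, <- Hloop, Hpi. reflexivity.
  - intros m Hm. rewrite pt_0. destruct (Nat.le_gt_cases m k).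
    + apply Hquadk; lia.
    + apply Hquad; lia.
Qed.

Lemma QP_subloop_first_step w k : QP_subloop w 0 k -> (0 < k)%nat ->
  hd StN w = StN \/ hd StN w = StE.
Proof.
  intros (_ & Hkw & _ & Hquad) Hk. specialize (Hquad 1%nat ltac:(lia)).
  destruct w as [|s w]; simpl in Hkw; [lia|].
  rewrite pt_cons, pt_0 in Hquad. simpl in *. destruct s; simpl in Hquad; auto; lia.
Qed.

Lemma last_firstn (w : list step) k d : (0 < k <= length w)%nat ->
  last (firstn k w) d = nth (k - 1) w d.
Proof.
  revert k. induction w as [|s w IH]; intros [|[|k]] Hk; simpl in Hk; try lia; auto.
  replace (S (S k) - 1)%nat with (S k) by lia. simpl nth.
  replace k with (S k - 1)%nat at 2 by lia. rewrite <- IH by lia.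
  destruct w; [simpl in Hk; lia | reflexivity].
Qed.

Lemma QP_subloop_last_step w k : QP_subloop w 0 k -> (0 < k)%nat ->
  last (firstn k w) StS = StS \/ last (firstn k w) StS = StW.
Proof.
  intros (_ & Hkw & Hloop & Hquad) Hk. rewrite last_firstn, (nth_indep _ _ StN) by lia.
  specialize (Hquad (k - 1)%nat ltac:(lia)).
  assert (Hlast := pt_succ w (k - 1) ltac:(lia)).
  replace (S (k - 1)) with k in Hlast by lia.
  rewrite <- Hloop, pt_0, pair_eq_iff in Hlast. rewrite pt_0 in Hquad. simpl in *.
  destruct (nth (k - 1) w StN); simpl in Hlast; auto; lia.
Qed.

Fixpoint init_loop_upto (w : list step) (k : nat) : nat :=
  match k with
  | O => O
  | S k' => if excluded_middle_informative (QP_subloop w 0 (S k')) then S k'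
            else init_loop_upto w k'
  end.

(* the length of the longest QP-subloop starting at the origin, [0] when there is none *)
Definition init_loop w := init_loop_upto w (length w).

Lemma init_loop_upto_le w k : (init_loop_upto w k <= k)%nat.
Proof. induction k; simpl; [lia|]. destruct excluded_middle_informative; lia. Qed.

Lemma init_loop_le w : (init_loop w <= length w)%nat.
Proof. apply init_loop_upto_le. Qed.

Lemma init_loop_QP_subloop w : (0 < init_loop w)%nat -> QP_subloop w 0 (init_loop w).
Proof.
  unfold init_loop. induction (length w); simpl; [lia|].
  destruct excluded_middle_informative; auto.
Qed.

Lemma init_loop_max w j : (init_loop w < j)%nat -> ~ QP_subloop w 0 j.
Proof.
  intros Hj Hloop. assert (Hjw : (j <= length w)%nat) by apply Hloop.
  revert Hj Hjw. unfold init_loop. induction (length w) as [|k IH]; simpl; [lia|].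
  destruct excluded_middle_informative; [lia|].
  intros Hj Hjk. destruct (Nat.eq_dec j (S k)) as [->|]; auto. apply IH; lia.
Qed.

Lemma init_loop_ext w w' : length w = length w' ->
  (forall j, QP_subloop w 0 j <-> QP_subloop w' 0 j) -> init_loop w = init_loop w'.
Proof.
  intros Hlen Hloops. unfold init_loop. rewrite Hlen. clear Hlen.
  induction (length w'); simpl; auto.
  destruct excluded_middle_informative as [a|a], excluded_middle_informative as [c|c]; auto;
    exfalso; firstorder.
Qed.

Definition swap_step (s : step) : step :=
  match s with StN => StE | StE => StN | StS => StW | StW => StS end.

Lemma swap_step_involutive s : swap_step (swap_step s) = s.
Proof. destruct s; reflexivity. Qed.

Lemma delta_swap_step s : delta (swap_step s) = (snd (delta s), fst (delta s)).
Proof. destruct s; reflexivity. Qed.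

(* Reflect the walk across the diagonal step by step, except that every maximal QP-subloop
   met along the way is copied unchanged; [n] is fuel, [length w] suffices. *)
Fixpoint flip_fuel (n : nat) (w : list step) : list step :=
  match n, w with
  | O, _ | _, [] => w
  | S n', s :: w' =>
      if Nat.eqb (init_loop w) 0 then swap_step s :: flip_fuel n' w'
      else firstn (init_loop w) w ++ flip_fuel n' (skipn (init_loop w) w)
  end.

Definition flip w := flip_fuel (length w) w.

Lemma flip_fuel_enough n m w : (length w <= n)%nat -> (length w <= m)%nat ->
  flip_fuel n w = flip_fuel m w.
Proof.
  revert m w; induction n as [|n IH]; intros m w Hn Hm.
  - destruct w; simpl in Hn; [|lia]. destruct m; reflexivity.
  - destruct m as [|m], w as [|s w']; simpl in Hn, Hm; try reflexivity; [lia|].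
    simpl. destruct (Nat.eqb_spec (init_loop (s :: w')) 0).
    + f_equal. apply IH; lia.
    + f_equal. apply IH; rewrite length_skipn; simpl length; lia.
Qed.

Lemma flip_cons_swap s w : init_loop (s :: w) = 0%nat -> flip (s :: w) = swap_step s :: flip w.
Proof. intros H0. unfold flip. simpl. rewrite H0. reflexivity. Qed.

Lemma flip_init_loop w : (0 < init_loop w)%nat ->
  flip w = firstn (init_loop w) w ++ flip (skipn (init_loop w) w).
Proof.
  intros Hpos. destruct w as [|s w']; [unfold init_loop in Hpos; simpl in Hpos; lia|].
  unfold flip at 1. simpl.
  destruct (Nat.eqb_spec (init_loop (s :: w')) 0); [lia|]. f_equal.
  apply flip_fuel_enough; rewrite length_skipn; simpl length; lia.
Qed.

Lemma length_strong_ind (P : list step -> Prop) :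
  (forall w, (forall w', (length w' < length w)%nat -> P w') -> P w) -> forall w, P w.
Proof.
  intros Hind. assert (Hn : forall n w, (length w <= n)%nat -> P w).
  { induction n; intros w Hw; apply Hind; intros w' Hw'; [lia|]. apply IHn; lia. }
  intros w; apply (Hn (length w)); lia.
Qed.

Lemma flip_ind (P : list step -> list step -> Prop) :
  P [] [] ->
  (forall s w, init_loop (s :: w) = 0%nat -> P w (flip w) ->
     P (s :: w) (swap_step s :: flip w)) ->
  (forall w, (0 < init_loop w)%nat ->
     P (skipn (init_loop w) w) (flip (skipn (init_loop w) w)) ->
     P w (firstn (init_loop w) w ++ flip (skipn (init_loop w) w))) ->
  forall w, P w (flip w).
Proof.
  intros Hnil Hswap Hloop w. induction w as [[|s w] IH] using length_strong_ind; auto.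
  destruct (Nat.eq_dec (init_loop (s :: w)) 0) as [H0|H0].
  - rewrite flip_cons_swap by auto. apply Hswap; [exact H0 | apply IH; simpl; lia].
  - rewrite flip_init_loop by lia. apply Hloop; [lia|]. apply IH.
    rewrite length_skipn. simpl length. lia.
Qed.

Lemma length_flip w : length (flip w) = length w.
Proof.
  revert w. apply (flip_ind (fun w fw => length fw = length w)); simpl; auto.
  intros w _ IH. rewrite length_app, length_firstn, IH, length_skipn.
  pose proof (init_loop_le w). lia.
Qed.

Lemma pt_app_closed u v k : endpoint u = (0, 0) -> (length u <= k)%nat ->
  pt (u ++ v) k = pt v (k - length u).
Proof. intros Hu Hk. rewrite pt_app_r, Hu by lia. pair_lia. Qed.

Lemma endpoint_init_loop w : (0 < init_loop w)%nat -> endpoint (firstn (init_loop w) w) = (0, 0).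
Proof. intros Hpos. destruct (init_loop_QP_subloop w Hpos) as (_ & _ & Hloop & _). auto. Qed.

Lemma length_firstn_init_loop w : length (firstn (init_loop w) w) = init_loop w.
Proof. rewrite length_firstn. pose proof (init_loop_le w). lia. Qed.

(* [b] is the start of the copied loop of [w'] that contains position [m] (or [m] itself):
   up to [b] the walks are mirror images, after [b] they move in parallel inside the
   quadrant above [pt w b]. *)
Definition shadowed (w w' : list step) (m : nat) : Prop :=
  exists b o1 o2, (b <= m)%nat /\ 0 <= o1 /\ 0 <= o2 /\
    pt w m = (fst (pt w b) + o1, snd (pt w b) + o2) /\
    pt w' m = (snd (pt w b) + o1, fst (pt w b) + o2) /\
    pt w' b = (snd (pt w b), fst (pt w b)).

Lemma shadowed_sym w w' m : shadowed w w' m -> shadowed w' w m.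
Proof.
  intros (b & o1 & o2 & Hb & Ho1 & Ho2 & Hw & Hw' & Hwb).
  exists b, o1, o2. rewrite Hwb. simpl.
  repeat split; auto. apply surjective_pairing.
Qed.

Lemma shadowed_flip w m : (m <= length w)%nat -> shadowed w (flip w) m.
Proof.
  revert w m.
  apply (flip_ind (fun w fw => forall m, (m <= length w)%nat -> shadowed w fw m)).
  - intros m Hm. simpl in Hm. replace m with 0%nat by lia.
    exists 0%nat, 0, 0. repeat split; lia.
  - intros s w _ IH [|m] Hm.
    + exists 0%nat, 0, 0. rewrite !pt_0. repeat split; lia.
    + simpl in Hm. destruct (IH m ltac:(lia)) as (b & o1 & o2 & Hb & Ho1 & Ho2 & Hw & Hw' & Hwb).
      exists (S b), o1, o2. rewrite !pt_cons, Hw, Hw', Hwb, delta_swap_step. simpl.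
      repeat split; try lia; pair_lia.
  - intros w Hpos IH m Hm.
    set (k := init_loop w) in *.
    assert (Hclosed := endpoint_init_loop w Hpos). fold k in Hclosed.
    assert (Hk := length_firstn_init_loop w). fold k in Hk.
    assert (Hsplit : w = firstn k w ++ skipn k w) by (symmetry; apply firstn_skipn).
    destruct (Nat.le_gt_cases m k) as [Hmk|Hmk].
    + destruct (init_loop_QP_subloop w Hpos) as (_ & _ & _ & Hquad).
      specialize (Hquad m ltac:(lia)). rewrite pt_0 in Hquad. simpl in Hquad.
      exists 0%nat, (fst (pt w m)), (snd (pt w m)). rewrite !pt_0. simpl.
      repeat split; try lia; [pair_lia|].
      assert (Hpm : pt w m = pt (firstn k w) m) by (rewrite Hsplit at 1; apply pt_app_l; lia).
      rewrite pt_app_l, <- Hpm by lia. pair_lia.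
    + destruct (IH (m - k)%nat ltac:(rewrite length_skipn; lia))
        as (b & o1 & o2 & Hb & Ho1 & Ho2 & Hw & Hw' & Hwb).
      assert (Hpt : forall j, (k <= j)%nat -> pt w j = pt (skipn k w) (j - k)).
      { intros j Hj. rewrite Hsplit at 1. rewrite (pt_app_closed _ _ _ Hclosed), Hk by lia. auto. }
      exists (k + b)%nat, o1, o2.
      rewrite !Hpt, !(pt_app_closed _ _ _ Hclosed), Hk by lia.
      replace (k + b - k)%nat with b by lia. repeat split; auto; lia.
Qed.

Lemma shadowed_QP_subloop w w' : length w = length w' ->
  (forall m, (m <= length w)%nat -> shadowed w w' m) ->
  forall j, QP_subloop w 0 j -> QP_subloop w' 0 j.
Proof.
  intros Hlen Hsh j (_ & Hjw & Hloop & Hquad). rewrite pt_0 in Hloop, Hquad.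
  destruct (Hsh j Hjw) as (b & o1 & o2 & Hb & Ho1 & Ho2 & Hw & Hw' & _).
  assert (Hpb := Hquad b ltac:(lia)). simpl in Hpb.
  rewrite <- Hloop, pair_eq_iff in Hw. simpl in Hw.
  split; [lia | split; [lia | split]].
  - rewrite pt_0, Hw'. pair_lia.
  - intros m Hm. rewrite pt_0.
    destruct (Hsh m ltac:(lia)) as (c & p1 & p2 & Hc & Hp1 & Hp2 & _ & Hm' & _).
    assert (Hpc := Hquad c ltac:(lia)). simpl in Hpc. rewrite Hm'. simpl. lia.
Qed.

Lemma QP_subloop_flip w j : QP_subloop (flip w) 0 j <-> QP_subloop w 0 j.
Proof.
  split; apply shadowed_QP_subloop; rewrite ?length_flip; auto.
  - intros m Hm. apply shadowed_sym, shadowed_flip. auto.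
  - intros m Hm. apply shadowed_flip. auto.
Qed.

Lemma init_loop_flip w : init_loop (flip w) = init_loop w.
Proof. apply init_loop_ext; [apply length_flip | apply QP_subloop_flip]. Qed.

Lemma flip_involutive w : flip (flip w) = w.
Proof.
  revert w. apply (flip_ind (fun w fw => flip fw = w)); auto.
  - intros s w H0 IH. rewrite flip_cons_swap.
    + rewrite IH, swap_step_involutive. reflexivity.
    + rewrite <- flip_cons_swap, init_loop_flip; auto.
  - (* [flip w] starts with the same maximal loop as [w], which the second pass copies back *)
    intros w Hpos IH. rewrite <- flip_init_loop by auto.
    rewrite (flip_init_loop (flip w)), init_loop_flip by (rewrite init_loop_flip; auto).
    rewrite flip_init_loop by auto.
    rewrite firstn_app, skipn_app, length_firstn_init_loop, Nat.sub_diag, firstn_O, skipn_O,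
      firstn_firstn, Nat.min_id, (skipn_all2 (firstn _ w)), app_nil_r
      by (rewrite length_firstn_init_loop; lia).
    simpl app. rewrite IH. apply firstn_skipn.
Qed.

Lemma endpoint_flip w : endpoint (flip w) = (snd (endpoint w), fst (endpoint w)).
Proof.
  revert w. apply (flip_ind (fun w fw => endpoint fw = (snd (endpoint w), fst (endpoint w)))).
  - reflexivity.
  - intros s w _ IH. rewrite !endpoint_cons, IH, delta_swap_step. reflexivity.
  - intros w Hpos IH.
    assert (Hw : endpoint w = endpoint (skipn (init_loop w) w)).
    { rewrite <- (firstn_skipn (init_loop w) w) at 1.
      rewrite endpoint_app, endpoint_init_loop by auto. pair_lia. }
    rewrite endpoint_app, IH, endpoint_init_loop, Hw by auto. pair_lia.
Qed.

Definition forbidden_pair (a b : step) : Prop := (a = StE /\ b = StS) \/ (a = StN /\ b = StW).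

Lemma eager_iff w : eager w <-> forall x y a b, forbidden_pair a b -> w <> x ++ a :: b :: y.
Proof.
  unfold eager. split.
  - intros [HES HNW] x y a b [[-> ->] | [-> ->]] Hw; [apply HES | apply HNW]; eauto.
  - intros H. split; intros (x & y & Hw); eapply (H x y); eauto; unfold forbidden_pair; auto.
Qed.

Lemma eager_app_l u v : eager (u ++ v) -> eager u.
Proof.
  rewrite !eager_iff. intros H x y a b Hab Hu. apply (H x (y ++ v) a b Hab).
  rewrite Hu, <- app_assoc. reflexivity.
Qed.

Lemma eager_app_r u v : eager (u ++ v) -> eager v.
Proof.
  rewrite !eager_iff. intros H x y a b Hab Hv. apply (H (u ++ x) y a b Hab).
  rewrite Hv, app_assoc. reflexivity.
Qed.

(* The defaults [StS] and [StN] never occur in a forbidden pair at these positions, so the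
   junction condition is void when [u] or [v] is empty. *)
Lemma eager_app u v : eager u -> eager v -> ~ forbidden_pair (last u StS) (hd StN v) ->
  eager (u ++ v).
Proof.
  rewrite !eager_iff. intros Hu Hv Hjunction x y a b Hab Huv.
  destruct (app_eq_app _ _ _ _ Huv) as (l & [[Hul Hl] | [Hx Hvl]]).
  - destruct l as [|c [|d l]]; simpl in Hl.
    + apply (Hv [] y a b Hab). auto.
    + injection Hl as <- Hv'. apply Hjunction. rewrite Hul, last_last, <- Hv'. auto.
    + injection Hl as <- <- _. apply (Hu x l a b Hab Hul).
  - apply (Hv l y a b Hab). auto.
Qed.

Lemma forbidden_pair_swap a b : forbidden_pair (swap_step a) (swap_step b) -> forbidden_pair a b.
Proof. unfold forbidden_pair; destruct a, b; simpl; intuition congruence. Qed.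

Lemma hd_flip w : hd StN (flip w) = swap_step (hd StN w) \/
  hd StN (flip w) = StN \/ hd StN (flip w) = StE.
Proof.
  revert w. apply (flip_ind (fun w fw => hd StN fw = swap_step (hd StN w) \/
    hd StN fw = StN \/ hd StN fw = StE)); simpl; auto.
  intros w Hpos _. right.
  assert (Hloop := init_loop_QP_subloop w Hpos).
  destruct w as [|s w]; [pose proof (init_loop_le []) as Hle; simpl in Hle; lia|].
  destruct (init_loop (s :: w)) as [|k]; [lia|].
  apply (QP_subloop_first_step _ _ Hloop Hpos).
Qed.

Lemma flip_eager w : eager w -> eager (flip w).
Proof.
  revert w. apply (flip_ind (fun w fw => eager w -> eager fw)); auto.
  - intros s w _ IH Hsw. change (swap_step s :: flip w) with ([swap_step s] ++ flip w).
    apply eager_app.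
    + apply eager_iff. intros x y a b _ H. destruct x as [|? [|]]; discriminate.
    + apply IH, (eager_app_r [s]). auto.
    + simpl. intros Hjunction. rewrite eager_iff in Hsw.
      destruct (hd_flip w) as [Hhd | [Hhd | Hhd]]; rewrite Hhd in Hjunction;
        [apply forbidden_pair_swap in Hjunction
        | destruct Hjunction as [[_ ?] | [_ ?]]; discriminate ..].
      destruct w as [|t w]; [destruct Hjunction as [[_ ?] | [_ ?]]; discriminate|].
      apply (Hsw [] w s t Hjunction). reflexivity.
  - intros w Hpos IH Hw. rewrite <- (firstn_skipn (init_loop w) w) in Hw.
    apply eager_app.
    + apply (eager_app_l _ _ Hw).
    + apply IH, (eager_app_r _ _ Hw).
    + intros Hjunction.
      destruct (QP_subloop_last_step w _ (init_loop_QP_subloop w Hpos) Hpos) as [Hl | Hl];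
        rewrite Hl in Hjunction; destruct Hjunction as [[? _] | [? _]]; discriminate.
Qed.

Lemma flip_standard w : standard w -> standard (flip w).
Proof.
  revert w. apply (flip_ind (fun w fw => standard w -> standard fw)); auto.
  - intros s w H0 IH Hsw [|i] j Hij Hloop.
    + exfalso. rewrite <- flip_cons_swap, QP_subloop_flip in Hloop by auto.
      apply (init_loop_max (s :: w) j); auto. lia.
    + change (swap_step s :: flip w) with ([swap_step s] ++ flip w) in Hloop.
      apply QP_subloop_app_r in Hloop; [|simpl; lia]. simpl in Hloop |- *.
      rewrite Nat.sub_0_r in Hloop.
      apply (IH (standard_app_r [s] w Hsw) i (j - 1)%nat); auto. lia.
  - intros w Hpos IH Hw i j Hij Hloop.
    set (k := init_loop w) in *.
    assert (Hk := length_firstn_init_loop w). fold k in Hk.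
    destruct (Nat.le_gt_cases k i) as [Hki | Hik].
    + assert (Hrest : standard (skipn k w)).
      { apply (standard_app_r (firstn k w)). rewrite firstn_skipn. auto. }
      apply QP_subloop_app_r in Hloop; [|lia]. rewrite Hk in Hloop.
      rewrite app_nth2, Hk by lia. apply (IH Hrest _ (j - k)%nat); auto; lia.
    + destruct (Nat.le_gt_cases j k) as [Hjk | Hkj].
      * rewrite QP_subloop_app_l in Hloop by lia.
        rewrite <- (firstn_skipn k w) in Hw.
        rewrite <- (QP_subloop_app_l _ (skipn k w)) in Hloop by lia.
        specialize (Hw i j Hij Hloop).
        rewrite app_nth1 in Hw |- * by lia. exact Hw.
      * (* the loop would extend the initial loop of [w] beyond [init_loop w] *)
        exfalso. unfold k in Hloop. rewrite <- flip_init_loop in Hloop by auto.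
        assert (Hinit : QP_subloop (flip w) 0 k)
          by (apply QP_subloop_flip, init_loop_QP_subloop; auto).
        assert (Hext := QP_subloop_extend _ _ _ _ Hinit Hloop ltac:(lia)).
        rewrite QP_subloop_flip in Hext. apply (init_loop_max w j); auto.
Qed.

Definition in_halfplane (w : list step) : Prop :=
  forall k, (k <= length w)%nat -> 0 <= fst (pt w k) + snd (pt w k).

Lemma flip_in_halfplane w : in_halfplane w -> in_halfplane (flip w).
Proof.
  intros Hw k Hk. rewrite length_flip in Hk.
  destruct (shadowed_flip w k Hk) as (b & o1 & o2 & Hb & Ho1 & Ho2 & _ & Hfk & _).
  specialize (Hw b ltac:(lia)). rewrite Hfk. simpl. lia.
Qed.

Lemma hd_in_halfplane v : in_halfplane v -> hd StN v = StN \/ hd StN v = StE.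
Proof.
  intros Hv. destruct v as [|s v]; [auto|].
  specialize (Hv 1%nat ltac:(simpl; lia)). rewrite pt_cons, pt_0 in Hv. simpl in *.
  destruct s; simpl in Hv; auto; lia.
Qed.

Lemma flip_big_walk w : big_walk w -> big_walk (flip w).
Proof.
  intros (Hstd & Heager & Hhalf & Hend). split; [|split; [|split]].
  - apply flip_standard; auto.
  - apply flip_eager; auto.
  - apply flip_in_halfplane; auto.
  - rewrite endpoint_flip. simpl. lia.
Qed.

Lemma flip_left_walk w : big_walk w -> 0 < fst (endpoint w) -> left_walk (flip w).
Proof.
  intros Hw Hx. split; [apply flip_big_walk; auto|].
  destruct Hw as (_ & _ & _ & Hend). rewrite endpoint_flip. simpl. lia.
Qed.

Lemma standard_app u v : standard u -> standard v -> in_halfplane u -> in_halfplane v ->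
  fst (endpoint u) + snd (endpoint u) = 0 -> standard (u ++ v).
Proof.
  intros Hu Hv Hhu Hhv Hend i j Hij Hloop.
  destruct (Nat.le_gt_cases j (length u)) as [Hju | Huj].
  - rewrite QP_subloop_app_l in Hloop by lia. rewrite app_nth1 by lia. apply (Hu i j); auto.
  - destruct (Nat.le_gt_cases (length u) i) as [Hui | Hiu].
    + rewrite QP_subloop_app_r in Hloop by lia. rewrite app_nth2 by lia.
      apply (Hv _ (j - length u)%nat); auto; lia.
    + (* a loop straddling the junction starts on the line x + y = 0, hence at [endpoint u] *)
      rewrite app_nth1 by lia. apply (Hu i (length u)); [lia|].
      destruct Hloop as (_ & _ & _ & Hquad).
      assert (Hiu' := Hquad (length u) ltac:(lia)).
      rewrite (pt_app_l u v (length u)), (pt_app_l u v i), (pt_full u (length u)) in Hiu' by lia.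
      assert (Hpi : pt u i = endpoint u) by (specialize (Hhu i ltac:(lia)); pair_lia).
      split; [lia | split; [lia | split]].
      * rewrite Hpi, pt_full; auto.
      * intros m Hm. rewrite <- (pt_app_l u v m), <- (pt_app_l u v i) by lia. apply Hquad. lia.
Qed.

Lemma big_walk_app u v : big_walk u -> big_walk v -> big_walk (u ++ v).
Proof.
  intros (Hstdu & Heu & Hhu & Hendu) (Hstdv & Hev & Hhv & Hendv).
  split; [|split; [|split]].
  - apply standard_app; auto.
  - apply eager_app; auto.
    destruct (hd_in_halfplane v Hhv) as [-> | ->]; intros [[_ ?] | [_ ?]]; discriminate.
  - intros k Hk. rewrite length_app in Hk. destruct (Nat.le_gt_cases k (length u)).
    + rewrite pt_app_l by lia. auto.
    + rewrite pt_app_r by lia. simpl. specialize (Hhv (k - length u)%nat ltac:(lia)). lia.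
  - rewrite endpoint_app. simpl. lia.
Qed.

Lemma big_walk_nil : big_walk [].
Proof.
  split; [|split; [|split]].
  - intros i j Hij (_ & Hj & _). simpl in Hj. lia.
  - split; intros (u & v & H); destruct u; discriminate.
  - intros k Hk. simpl in Hk. replace k with 0%nat by lia. simpl. lia.
  - simpl. lia.
Qed.

Lemma big_walk_NS : big_walk [StN; StS].
Proof.
  split; [|split; [|split]].
  - intros [|[|i]] j Hij (_ & Hj & Hloop & _); simpl in Hj; [reflexivity | | lia].
    destruct j as [|[|[|j]]]; try lia. discriminate.
  - split; intros (u & v & H); destruct u as [|a [|b [|c u]]]; simpl in H; try discriminate;
      inversion H.
  - intros k Hk. simpl in Hk. destruct k as [|[|[|k]]]; try lia; unfold pt; simpl; lia.
  - simpl. lia.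
Qed.

Close Scope Z_scope.

Lemma length_le_of_injective {A B} (f : A -> B) (l : list A) (l' : list B) :
  NoDup l -> (forall x y, In x l -> In y l -> f x = f y -> x = y) ->
  (forall x, In x l -> In (f x) l') -> length l <= length l'.
Proof.
  intros Hl Hinj Hin. rewrite <- (length_map f). apply NoDup_incl_length.
  - apply NoDup_map_NoDup_ForallPairs; auto.
  - intros y Hy. apply in_map_iff in Hy as (x & <- & Hx). auto.
Qed.

Lemma NoDup_list_prod {A B} (l : list A) (l' : list B) :
  NoDup l -> NoDup l' -> NoDup (list_prod l l').
Proof.
  intros Hl Hl'. induction Hl as [|a l Ha Hl IH]; simpl; [constructor|].
  apply NoDup_app; auto.
  - apply NoDup_map_NoDup_ForallPairs; auto. intros y y' _ _ [= ->]. reflexivity.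
  - intros p Hp Hp'. apply in_map_iff in Hp as (y & <- & _).
    apply in_prod_iff in Hp' as [Ha' _]. contradiction.
Qed.

Lemma app_inj_length {A} (u u' v v' : list A) : length u = length u' ->
  u ++ v = u' ++ v' -> u = u' /\ v = v'.
Proof.
  intros Hlen Huv.
  destruct (app_eq_app _ _ _ _ Huv) as ([|a l] & [[Hu Hv] | [Hu Hv]]); subst;
    rewrite ?app_nil_r; auto; rewrite length_app in Hlen; simpl in Hlen; lia.
Qed.

Lemma counts_le_of_imp (P Q : list step -> Prop) c d : counts P c -> counts Q d ->
  (forall w, P w -> Q w) -> forall n, c n <= d n.
Proof.
  intros Hc Hd HPQ n. destruct (Hc n) as (L & HL & HinL & <-), (Hd n) as (L' & _ & HinL' & <-).
  apply NoDup_incl_length; auto. intros w Hw. apply HinL in Hw as [? ?]. apply HinL'. auto.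
Qed.

Lemma big_walk_count_supermult b : counts big_walk b -> forall m n, b m * b n <= b (m + n).
Proof.
  intros Hb m n.
  destruct (Hb m) as (Lm & Hm & Hinm & <-), (Hb n) as (Ln & Hn & Hinn & <-),
    (Hb (m + n)) as (L & _ & Hin & <-).
  rewrite <- length_prod.
  apply (length_le_of_injective (fun p => fst p ++ snd p)); [apply NoDup_list_prod; auto| |].
  - intros [u v] [u' v'] Huv Huv' Heq. apply in_prod_iff in Huv as [Hu _], Huv' as [Hu' _].
    apply Hinm in Hu as [Hu _], Hu' as [Hu' _].
    destruct (app_inj_length u u' v v') as [-> ->]; auto; lia.
  - intros [u v] Huv. apply in_prod_iff in Huv as [Hu Hv].
    apply Hinm in Hu as [Hu Hbu]. apply Hinn in Hv as [Hv Hbv].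
    apply Hin. simpl. rewrite length_app. split; [lia | apply big_walk_app; auto].
Qed.

Fixpoint walks_of_length (k : nat) : list (list step) :=
  match k with
  | O => [[]]
  | S k' => flat_map (fun s => map (cons s) (walks_of_length k')) [StN; StE; StS; StW]
  end.

Lemma in_walks_of_length w : In w (walks_of_length (length w)).
Proof.
  induction w as [|s w IH]; simpl; auto.
  rewrite !in_app_iff, !in_map_iff.
  destruct s; [left | right; left | do 2 right; left | do 3 right; left]; eauto.
Qed.

Lemma length_walks_of_length k : length (walks_of_length k) = 4 ^ k.
Proof.
  induction k as [|k IH]; simpl; auto. rewrite !length_app, !length_map, IH. simpl. lia.
Qed.

Lemma counts_le_16_pow (P : list step -> Prop) c : counts P c -> forall n, c n <= 16 ^ n.
Proof.
  intros Hc n. destruct (Hc n) as (L & HL & HinL & <-).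
  replace (16 ^ n) with (4 ^ (2 * n)) by (rewrite Nat.pow_mul_r; reflexivity).
  rewrite <- length_walks_of_length. apply NoDup_incl_length; auto.
  intros w Hw. apply HinL in Hw as [Hlen _]. rewrite <- Hlen. apply in_walks_of_length.
Qed.

Lemma big_walk_count_le_twice_left b bh : counts big_walk b -> counts left_walk bh ->
  forall n, b n <= 2 * bh n.
Proof.
  intros Hb Hbh n. destruct (Hb n) as (L & HL & HinL & <-), (Hbh n) as (Lh & HLh & HinLh & <-).
  set (ends_left := fun w => Z.leb (fst (endpoint w)) 0).
  rewrite <- (filter_length ends_left L).
  assert (Hleft : length (filter ends_left L) <= length Lh).
  { apply NoDup_incl_length; [apply NoDup_filter; auto|].
    intros w Hw. apply filter_In in Hw as [Hw Hx]. apply HinL in Hw as [Hlen Hw].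
    apply HinLh. unfold ends_left in Hx. rewrite Z.leb_le in Hx.
    split; [exact Hlen | split; auto]. }
  assert (Hright : length (filter (fun w => negb (ends_left w)) L) <= length Lh).
  { apply (length_le_of_injective flip); [apply NoDup_filter; auto| |].
    - intros u v _ _ Huv. rewrite <- (flip_involutive u), Huv. apply flip_involutive.
    - intros w Hw. apply filter_In in Hw as [Hw Hx]. apply HinL in Hw as [Hlen Hw].
      unfold ends_left in Hx. rewrite Bool.negb_true_iff, Z.leb_gt in Hx.
      apply HinLh. rewrite length_flip. split; auto. apply flip_left_walk; auto. }
  lia.
Qed.

Lemma big_walk_count_pos b : counts big_walk b -> forall n, 1 <= b n.
Proof.
  intros Hb.
  assert (Hex : forall n w, length w = 2 * n -> big_walk w -> 1 <= b n).
  { intros n w Hlen Hw. destruct (Hb n) as (L & _ & HinL & <-).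
    destruct L; [exfalso; apply (HinL w) | simpl; lia]. auto. }
  induction n as [|n IH]; [apply (Hex 0 []); auto using big_walk_nil|].
  assert (H1 : 1 <= b 1) by (apply (Hex 1 [StN; StS]); auto using big_walk_NS).
  pose proof (big_walk_count_supermult b Hb n 1) as Hmult. rewrite Nat.add_1_r in Hmult. nia.
Qed.

Open Scope R_scope.

Lemma Un_cv_const x : Un_cv (fun _ => x) x.
Proof. intros eps Heps. exists 0%nat. intros n _. rewrite R_dist_eq. lra. Qed.

Lemma Un_cv_inv_S : Un_cv (fun n => / INR (S n)) 0.
Proof.
  intros eps Heps. destruct (RinvN_cv Heps) as [N HN].
  exists N. intros n Hn. rewrite S_INR. apply HN. auto.
Qed.

Lemma Un_cv_squeeze (u v w : nat -> R) L : Un_cv u L -> Un_cv w L ->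
  (forall n, u n <= v n <= w n) -> Un_cv v L.
Proof.
  intros Hu Hw Huvw eps Heps.
  destruct (Hu eps Heps) as [N1 HN1], (Hw eps Heps) as [N2 HN2].
  exists (N1 + N2)%nat. intros n Hn.
  specialize (HN1 n ltac:(lia)). specialize (HN2 n ltac:(lia)). specialize (Huvw n).
  unfold R_dist in *. apply Rabs_def2 in HN1, HN2. apply Rabs_def1; lra.
Qed.

Section Fekete.

Variable a : nat -> R.
Hypothesis a_superadditive : forall m n, a m + a n <= a (m + n)%nat.
Hypothesis a_nonneg : forall n, 0 <= a n.

Lemma superadditive_mul_le k q : INR q * a k <= a (k * q)%nat.
Proof.
  induction q as [|q IH].
  - simpl. rewrite Rmult_0_l. apply a_nonneg.
  - rewrite S_INR, Nat.mul_succ_r. specialize (a_superadditive (k * q)%nat k). lra.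
Qed.

Lemma superadditive_lower_bound k n : (1 <= k)%nat -> (INR n - INR k) * a k <= INR k * a n.
Proof.
  intros Hk.
  assert (Hdiv := Nat.div_mod_eq n k). assert (Hmod := Nat.mod_upper_bound n k ltac:(lia)).
  set (q := (n / k)%nat) in *. set (r := (n mod k)%nat) in *.
  assert (Hkq : a (k * q)%nat <= a n).
  { rewrite Hdiv. specialize (a_superadditive (k * q)%nat r). specialize (a_nonneg r). lra. }
  assert (Hn : INR n = INR k * INR q + INR r) by (rewrite Hdiv, plus_INR, mult_INR; auto).
  assert (Hr : INR r < INR k) by (apply lt_INR; auto).
  assert (Hnk : INR n - INR k <= INR k * INR q) by lra.
  apply Rle_trans with (INR k * INR q * a k).
  - apply Rmult_le_compat_r; auto.
  - rewrite Rmult_assoc. apply Rmult_le_compat_l; [apply pos_INR|].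
    pose proof (superadditive_mul_le k q). lra.
Qed.

Lemma fekete M : (forall n, a n <= INR n * M) ->
  exists L, Un_cv (fun n => / INR (S n) * a (S n)) L.
Proof.
  intros Hbound. set (c := fun n => / INR (S n) * a (S n)).
  assert (HcM : forall n, c n <= M).
  { intros n. unfold c. assert (0 < INR (S n)) by (apply lt_0_INR; lia).
    specialize (Hbound (S n)). apply Rmult_le_reg_l with (INR (S n)); auto.
    rewrite <- Rmult_assoc, Rinv_r by lra. lra. }
  destruct (completeness (fun x => exists n, x = c n)) as [L [HLub HLleast]].
  { exists M. intros x [n ->]. auto. }
  { exists (c 0%nat), 0%nat. auto. }
  exists L. intros eps Heps.
  assert (Hk : exists k, L - eps / 2 < c k).
  { apply NNPP. intros Hnone. assert (L <= L - eps / 2); [|lra].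
    apply HLleast. intros x [n ->]. apply Rnot_lt_le. intros Hn. apply Hnone. eauto. }
  destruct Hk as [k Hk].
  destruct (CV_mult _ _ _ _ (Un_cv_const (a (S k))) Un_cv_inv_S (eps / 2) ltac:(lra)) as [N HN].
  exists N. intros n Hn. specialize (HN n Hn). unfold R_dist in *.
  rewrite Rmult_0_r, Rminus_0_r, Rabs_pos_eq in HN
    by (apply Rmult_le_pos; [apply a_nonneg | left; apply Rinv_0_lt_compat, lt_0_INR; lia]).
  assert (Hcn : c n <= L) by (apply HLub; eauto).
  (* [superadditive_lower_bound] divided by [(k+1)(n+1)] *)
  assert (Hlow : c k - a (S k) * / INR (S n) <= c n).
  { assert (Hn1 : 0 < INR (S n)) by (apply lt_0_INR; lia).
    assert (Hk1 : 0 < INR (S k)) by (apply lt_0_INR; lia).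
    assert (Hlb := superadditive_lower_bound (S k) (S n) ltac:(lia)).
    unfold c. apply Rmult_le_reg_l with (INR (S n) * INR (S k)); [nra|].
    replace (INR (S n) * INR (S k) * (/ INR (S k) * a (S k) - a (S k) * / INR (S n)))
      with ((INR (S n) - INR (S k)) * a (S k)) by (field; lra).
    replace (INR (S n) * INR (S k) * (/ INR (S n) * a (S n)))
      with (INR (S k) * a (S n)) by (field; lra).
    exact Hlb. }
  rewrite Rabs_left1 by lra. lra.
Qed.

End Fekete.

Lemma ln_le_compat x y : 0 < x -> x <= y -> ln x <= ln y.
Proof. intros Hx [Hxy | ->]; [left; apply ln_increasing | right]; auto. Qed.

Definition log_rate (c : nat -> nat) (n : nat) : R := / INR (S n) * ln (INR (c (S n))).

Lemma nroot_cv_of_log_rate c L : Un_cv (log_rate c) L -> Un_cv (nroot c) (exp L).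
Proof.
  apply (continuity_seq exp (log_rate c) L).
  apply derivable_continuous_pt, derivable_exp.
Qed.

Lemma log_rate_cv_supermult (c : nat -> nat) K :
  (forall m n, c m * c n <= c (m + n))%nat -> (forall n, 1 <= c n)%nat ->
  (forall n, c n <= K ^ n)%nat -> exists L, Un_cv (log_rate c) L.
Proof.
  intros Hmult Hpos Hbound.
  assert (HcR : forall n, 0 < INR (c n)) by (intros n; apply lt_0_INR; specialize (Hpos n); lia).
  assert (HK : 0 < INR K).
  { apply lt_0_INR. specialize (Hbound 1%nat). specialize (Hpos 1%nat). simpl in Hbound. lia. }
  apply (fekete (fun n => ln (INR (c n)))) with (M := ln (INR K)).
  - intros m n. rewrite <- ln_mult by auto. apply ln_le_compat; [apply Rmult_lt_0_compat; auto|].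
    rewrite <- mult_INR. apply le_INR. auto.
  - intros n. rewrite <- ln_1. apply ln_le_compat; [lra|]. apply (le_INR 1). auto.
  - intros n. rewrite <- ln_pow by auto. apply ln_le_compat; auto.
    rewrite <- pow_INR. apply le_INR. auto.
Qed.

Lemma log_rate_cv_sandwich (c d : nat -> nat) K L :
  (forall n, 1 <= d n <= c n)%nat -> (forall n, c n <= K * d n)%nat ->
  Un_cv (log_rate c) L -> Un_cv (log_rate d) L.
Proof.
  intros Hdc Hcd Hc.
  assert (HdR : forall n, 0 < INR (d n)) by (intros n; apply lt_0_INR; specialize (Hdc n); lia).
  assert (HK : 0 < INR K).
  { apply lt_0_INR. specialize (Hdc 0%nat). specialize (Hcd 0%nat). nia. }
  apply (Un_cv_squeeze (fun n => log_rate c n - ln (INR K) * / INR (S n)) _ (log_rate c)); auto.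
  - replace L with (L - ln (INR K) * 0) by ring.
    apply CV_minus; auto. apply CV_mult; [apply Un_cv_const | apply Un_cv_inv_S].
  - intros n. unfold log_rate.
    assert (Hn : 0 <= / INR (S n)) by (left; apply Rinv_0_lt_compat, lt_0_INR; lia).
    split.
    + rewrite (Rmult_comm (ln _)), <- Rmult_minus_distr_l. apply Rmult_le_compat_l; auto.
      assert (Hln : ln (INR (c (S n))) <= ln (INR K) + ln (INR (d (S n)))).
      { rewrite <- ln_mult by auto.
        apply ln_le_compat; [apply lt_0_INR; specialize (Hdc (S n)); lia|].
        rewrite <- mult_INR. apply le_INR. auto. }
      lra.
    + apply Rmult_le_compat_l; auto. apply ln_le_compat; auto. apply le_INR. apply Hdc.
Qed.

Theorem mainTheorem3 (b bh : nat -> nat)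
  (Hb : counts big_walk b) (Hbh : counts left_walk bh) :
  (forall m n, (b m * b n <= b (m + n))%nat) /\
  (forall n, (b n <= 16 ^ n)%nat) /\
  (exists l : R, Un_cv (nroot b) l) /\
  (forall n, (b n <= 2 * bh n)%nat) /\
  (exists l : R, Un_cv (nroot b) l /\ Un_cv (nroot bh) l).
Proof.
  assert (Hmult := big_walk_count_supermult b Hb).
  assert (Hbound := counts_le_16_pow big_walk b Hb).
  assert (Hpos := big_walk_count_pos b Hb).
  assert (Htwice := big_walk_count_le_twice_left b bh Hb Hbh).
  assert (Hbh_le := counts_le_of_imp left_walk big_walk bh b Hbh Hb (fun w Hw => proj1 Hw)).
  destruct (log_rate_cv_supermult b 16 Hmult Hpos Hbound) as [L HL].
  assert (HLh : Un_cv (log_rate bh) L).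
  { apply (log_rate_cv_sandwich b bh 2); auto.
    intros n. specialize (Htwice n). specialize (Hpos n). specialize (Hbh_le n). lia. }
  apply nroot_cv_of_log_rate in HL, HLh.
  repeat split; eauto.
Qed.
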